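(* Suppose $s\in S$ is an element all of whose monomials have degree $0$ modulo $\vec c$ (i.e.\ degree in $\mathbb{Z}\vec c\subset L$). Then the non-constant terms of $s$ lie in the ideal $(x^{pq-1},x^py,xy^q,y^{pq-1})$.
   Context: Let $p,q\ge2$ be integers. Let $L$ be the abelian group generated by $\vec x,\vec y,\vec c$ modulo $p\vec x+\vec y=\vec x+q\vec y=\vec c$, and let $S=\mathbb{C}[x,y]$ be $L$-graded with $\deg x=\vec x$, $\deg y=\vec y$. *)

From mathcomp Require Import all_boot all_algebra.
From mathcomp Require Import Rstruct.
From mathcomp.real_closed Require Import complex.
From mathcomp Require Import mpoly.
Set Implicit Arguments. Unset Strict Implicit. Unset Printing Implicit Defensive.
Import GRing.Theory.
Local Open Scope ring_scope.

Notation CC := (complex Rdefinitions.R).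

(* The group L = Z x_vec + Z y_vec + Z c_vec modulo the relations
   p x + y = c and x + q y = c.  An element a x + b y + k c is represented by
   the triple (a, b, k) : int * int * int; two triples represent the same
   element of L iff their difference lies in the subgroup generated by the
   relation vectors (p, 1, -1) and (1, q, -1). *)
Definition Lrep := (int * int * int)%type.

Definition L_eq (p q : nat) (u v : Lrep) : Prop :=
  exists m n : int,
    [/\ u.1.1 - v.1.1 = m * p%:Z + n,
        u.1.2 - v.1.2 = m + n * q%:Z
      & u.2 - v.2 = - m - n].

Definition mdeg (mon : 'X_{1.. 2}) : Lrep :=
  ((mon 0%R)%:Z, (mon 1%R)%:Z, 0%:Z).

Definition deg_in_Zc (p q : nat) (mon : 'X_{1.. 2}) : Prop :=
  exists k : int, L_eq p q (mdeg mon) (0%:Z, 0%:Z, k).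

Definition xS : {mpoly CC[2]} := 'X_0.
Definition yS : {mpoly CC[2]} := 'X_1.

Definition in_ideal_J (p q : nat) (f : {mpoly CC[2]}) : Prop :=
  exists f1 f2 f3 f4 : {mpoly CC[2]},
    f = f1 * xS ^+ (p * q - 1) + f2 * (xS ^+ p * yS)
        + f3 * (xS * yS ^+ q) + f4 * yS ^+ (p * q - 1).

Notation mon2 := ('X_{1.. 2}).
Definition nonconst_part (s : {mpoly CC[2]}) : {mpoly CC[2]} :=
  s - (s@_0)%:MP.

(* A monomial x^a y^b has L-degree in Z c exactly when (a, b) = m (p, 1) + n (1, q)
   for integers m, n, and then a q - b = m (p q - 1) and b p - a = n (p q - 1).
   If x^a y^b is divisible by none of x^(pq-1), x^p y, x y^q, y^(pq-1), then
   either one exponent vanishes and the other is below p q - 1, or 0 < a < p and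
   0 < b < q; in each case these congruences force a = b = 0. Since J is an ideal
   and the non-constant part of s is a sum of such monomials, it lies in J. *)

From mathcomp Require Import all_boot all_algebra.
From mathcomp Require Import Rstruct.
From mathcomp.real_closed Require Import complex.
From mathcomp Require Import mpoly.
From mathcomp Require Import zify ring.
Set Implicit Arguments.
Unset Strict Implicit.
Unset Printing Implicit Defensive.
Local Open Scope ring_scope.
Import GRing.Theory.

Definition in_J_exponent (p q a b : nat) : bool :=
  [|| (p * q - 1 <= a)%N, (p <= a)%N && (0 < b)%N,
      (0 < a)%N && (q <= b)%N | (p * q - 1 <= b)%N].

Lemma in_J_exponent_Zc (p q a b : nat) (m n : int) :
  (2 <= p)%N -> (2 <= q)%N -> (0 < a + b)%N ->
  a%:Z = m * p%:Z + n -> b%:Z = m + n * q%:Z -> in_J_exponent p q a b.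
Proof.
move=> hp hq ab_gt0 ha hb.
have ea : a%:Z * q%:Z - b%:Z = m * (p%:Z * q%:Z - 1) by rewrite ha hb; ring.
have eb : b%:Z * p%:Z - a%:Z = n * (p%:Z * q%:Z - 1) by rewrite ha hb; ring.
have pq_ge3 : 3 <= p%:Z * q%:Z - 1 by nia.
apply/or4P; have [a0 | a_gt0] := posnP a.
  have m_lt0 : m < 0 by nia.
  by constructor 4; nia.
have [b0 | b_gt0] := posnP b.
  have n_lt0 : n < 0 by nia.
  by constructor 1; nia.
have [pa | ap] := leqP p a; first by constructor 2; lia.
have [qb | bq] := leqP q b; first by constructor 3; lia.
(* Now 0 < a q - b < p q - 1, so a q - b is not a multiple of p q - 1. *)
have m_gt0 : 0 < m by nia.
have m_lt1 : m < 1 by nia.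
lia.
Qed.

Lemma in_ideal_J0 p q : in_ideal_J p q 0.
Proof. by exists 0, 0, 0, 0; ring. Qed.

Lemma in_ideal_JD p q f g :
  in_ideal_J p q f -> in_ideal_J p q g -> in_ideal_J p q (f + g).
Proof.
move=> [f1 [f2 [f3 [f4 ->]]]] [g1 [g2 [g3 [g4 ->]]]].
by exists (f1 + g1), (f2 + g2), (f3 + g3), (f4 + g4); ring.
Qed.

Lemma in_ideal_JMl p q g f : in_ideal_J p q f -> in_ideal_J p q (g * f).
Proof.
move=> [f1 [f2 [f3 [f4 ->]]]].
by exists (g * f1), (g * f2), (g * f3), (g * f4); ring.
Qed.

Lemma in_ideal_J_XY p q a b :
  in_J_exponent p q a b -> in_ideal_J p q (xS ^+ a * yS ^+ b).
Proof.
case/or4P=> [ha | /andP[ha hb] | /andP[ha hb] | hb].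
- rewrite -(subnK ha) exprD.
  by exists (xS ^+ (a - (p * q - 1)) * yS ^+ b), 0, 0, 0; ring.
- rewrite -(subnK ha) -(subnK hb) !exprD.
  by exists 0, (xS ^+ (a - p) * yS ^+ (b - 1)), 0, 0; ring.
- rewrite -(subnK ha) -(subnK hb) !exprD.
  by exists 0, 0, (xS ^+ (a - 1) * yS ^+ (b - q)), 0; ring.
- rewrite -(subnK hb) exprD.
  by exists 0, 0, 0, (xS ^+ a * yS ^+ (b - (p * q - 1))); ring.
Qed.

Lemma big_ord2 (R : Type) (idx : R) (op : R -> R -> R) (F : 'I_2 -> R) :
  \big[op/idx]_(i < 2) F i = op (F 0%R) (op (F 1%R) idx).
Proof.
by rewrite !big_ord_recl big_ord0; congr (op _ (op (F _) _)); apply: val_inj.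
Qed.

Lemma mpolyX2 (m : mon2) : 'X_[m] = xS ^+ m 0%R * yS ^+ m 1%R.
Proof. by rewrite mpolyXE_id big_ord2 mulr1. Qed.

Lemma deg_in_Zc_in_J_exponent p q (m : mon2) :
  (2 <= p)%N -> (2 <= q)%N -> m != 0%MM -> deg_in_Zc p q m ->
  in_J_exponent p q (m 0%R) (m 1%R).
Proof.
move=> hp hq m_neq0 [k [i [j [ha hb _]]]]; rewrite /= !subr0 in ha hb.
apply: (in_J_exponent_Zc hp hq _ ha hb).
by move: m_neq0; rewrite -mdeg_eq0 mdegE big_ord2 addn0 lt0n.
Qed.

Lemma nonconst_partD : {morph nonconst_part : f g / f + g}.
Proof. by move=> f g; rewrite /nonconst_part mcoeffD mpolyCD opprD addrACA. Qed.

Lemma nonconst_part0 : nonconst_part 0 = 0.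
Proof. by rewrite /nonconst_part mcoeff0 subrr. Qed.

Lemma nonconst_partZX (c : CC) (m : mon2) :
  nonconst_part (c *: 'X_[m]) = if m == 0%MM then 0 else c%:MP * 'X_[m].
Proof.
rewrite /nonconst_part mcoeffZ mcoeffX; case: eqP => [-> | _].
  by rewrite mulr1 mpolyX0 -alg_mpolyC subrr.
by rewrite mulr0 subr0 mul_mpolyC.
Qed.

Theorem lemma2p3 (p q : nat) (hp : (2 <= p)%N) (hq : (2 <= q)%N)
  (s : {mpoly CC[2]}) :
  (forall mon : mon2, mon \in msupp s -> deg_in_Zc p q mon) ->
  in_ideal_J p q (nonconst_part s).
Proof.
move=> s_Zc; rewrite (mpolyE s) (big_morph _ nonconst_partD nonconst_part0).
rewrite big_seq; apply: big_ind => [||m /s_Zc m_Zc].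
- exact: in_ideal_J0.
- exact: in_ideal_JD.
rewrite nonconst_partZX; case: eqP => [_ | /eqP m_neq0]; first exact: in_ideal_J0.
rewrite mpolyX2; apply/in_ideal_JMl/in_ideal_J_XY.
exact: deg_in_Zc_in_J_exponent.
Qed.
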